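(* Let $\mathcal F$ be a Banach function space compactly embedded in $C(\mathbf X)$. There exists a strategy for Predictor that produces predictions with $|\mu_n|\le1$ and guarantees, for all $N=1,2,\dots$, all $F\in\mathcal F$ and all moves of Reality, $$\sum_{n=1}^N(y_n-\mu_n)^2\le\sum_{n=1}^N(y_n-F(x_n))^2+C\inf_{\epsilon\in(0,1/2]}\left(\mathcal H_{\epsilon/\phi}(U_{\mathcal F})+\log\log\frac1\epsilon+\log\log\phi+\epsilon N+1\right),$$ where $C$ is a universal constant and $\phi:=2\max(1,\|F\|_{\mathcal F})$.
   Context: Protocol: $\mathbf X$ is a nonempty topological space. At each round $n=1,2,\dots$ Reality announces $x_n\in\mathbf X$, Predictor announces $\mu_n\in\mathbb R$, Reality announces $y_n\in[-1,1]$; a strategy for Predictor maps each history $(x_1,y_1,\dots,x_{n-1},y_{n-1},x_n)$ to $\mu_n$, and guarantees must hold for all (possibly adaptive) moves of Reality. $C(\mathbf X)$ is the space of bounded continuous real-valued functions on $\mathbf X$ with the supremum norm. A Banach function space compactly embedded in $C(\mathbf X)$ is a linear subspace $\mathcal F\subseteq C(\mathbf X)$ equipped with a norm $\|\cdot\|_{\mathcal F}$ making it a Banach space, such that its unit ball $U_{\mathcal F}=\{F\in\mathcal F:\|F\|_{\mathcal F}\le1\}$ is a compact subset of $C(\mathbf X)$. For a totally bounded subset $A$ of $C(\mathbf X)$, $\mathcal H_\epsilon(A)$ is $\log_2$ of the minimal number of points of $A$ forming an $\epsilon$-net for $A$ in the supremum metric. $\log=\log_2$. *)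

From HB Require Import structures.
From mathcomp Require Import all_boot all_order all_algebra.
From mathcomp Require Import all_classical all_reals all_analysis.
From mathcomp Require Import Rstruct Rstruct_topology.
Set Implicit Arguments. Unset Strict Implicit. Unset Printing Implicit Defensive.
Import Order.TTheory GRing.Theory Num.Theory.
Import numFieldNormedType.Exports.
Local Open Scope classical_set_scope.
Local Open Scope ring_scope.

Notation R := Rdefinitions.R.

Definition log2 (x : R) : R := ln x / ln 2.

Definition bcont (X : topologicalType) (f : X -> R) : Prop :=
  continuous f /\ exists M : R, forall x, `|f x| <= M.

(* (Fs, nF) is a Banach function space compactly embedded in C(X):
   Fs is a linear subspace of C(X), nF is a norm on Fs, (Fs, nF) is complete,
   and the closed unit ball is compact in C(X) (sup-norm = uniform topology). *)
Definition banach_compact_emb (X : topologicalType)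
    (Fs : set (X -> R)) (nF : (X -> R) -> R) : Prop :=
  [/\ (forall f, Fs f -> bcont f),
      Fs (fun _ => 0) /\
      (forall f g, Fs f -> Fs g -> Fs (fun x => f x + g x)) /\
      (forall (a : R) f, Fs f -> Fs (fun x => a * f x)),
      (forall f, Fs f -> nF f = 0 -> f = (fun _ => 0)) /\
      (forall (a : R) f, Fs f -> nF (fun x => a * f x) = `|a| * nF f) /\
      (forall f g, Fs f -> Fs g -> nF (fun x => f x + g x) <= nF f + nF g),
      (forall u : nat -> (X -> R), (forall k, Fs (u k)) ->
         (forall e : R, 0 < e -> exists K : nat, forall m n : nat,
             (K <= m)%N -> (K <= n)%N -> nF (fun x => u m x - u n x) <= e) ->
         exists f, Fs f /\ forall e : R, 0 < e -> exists K : nat, forall n : nat,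
             (K <= n)%N -> nF (fun x => u n x - f x) <= e) &
      compact ([set f | Fs f /\ nF f <= 1] : set {uniform X -> R})].

Definition net_sizes (X : Type) (eps : R) (A : set (X -> R)) : set nat :=
  [set n | exists g : nat -> (X -> R),
     (forall i, (i < n)%N -> A (g i)) /\
     forall f, A f -> exists i, (i < n)%N /\ forall x, `|f x - g i x| <= eps].

Definition entropy (X : Type) (eps : R) (A : set (X -> R)) : R :=
  log2 (inf [set (n%:R : R) | n in net_sizes eps A]).

(* Predictor's strategy: history (x_1,y_1,...,x_{n-1},y_{n-1}) and x_n |-> mu_n *)
Definition strategy (X : Type) := seq (X * R) -> X -> R.

(* prediction at round n (n >= 1), for Reality's moves x, y indexed from 1 *)
Definition pred_at (X : Type) (S : strategy X) (x : nat -> X) (y : nat -> R)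
    (n : nat) : R :=
  S [seq (x i, y i) | i <- iota 1 n.-1] (x n).

From HB Require Import structures.
From mathcomp Require Import all_boot all_order all_algebra.
From mathcomp Require Import all_classical all_reals all_analysis.
From mathcomp Require Import Rstruct Rstruct_topology.
From mathcomp Require Import ring lra.
Set Implicit Arguments. Unset Strict Implicit. Unset Printing Implicit Defensive.
Import Order.TTheory GRing.Theory Num.Theory.
Import numFieldNormedType.Exports.
Local Open Scope classical_set_scope.
Local Open Scope ring_scope.

(* Predictor runs the exponentially weighted average forecaster over the
   countable family of experts [((j, k), i)]: the [i]-th point of a minimal
   [2^-(j+k)]-net of the unit ball, rescaled by [2^j] and clipped to [[-1, 1]].
   For the learning rate [eta = 1/64] the square loss on [[-1, 1]] is
   exp-concave, so the forecaster's loss is at most that of any expert plus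
   [ln (1 / prior)/eta].  Expert class [(j, k)] only enters the pool at round
   [t] once [j, k < 2^t], and is charged the forecaster's own loss before, so
   each forecast is a finite average and the sleeping rounds cost
   [O (log j + log k)].  Against [F] with [||F|| <= 2^j <= phi], the expert of
   accuracy [2^-k ~ eps] loses at most [8 eps N] more than [F], and its prior
   [1 / (|net| (j+1)(j+2)(k+1)(k+2))] costs [H_(eps/phi) + O (log j + log k)],
   where [j <= log phi] and [k <= log (1/eps)]. *)

(* Any [eta <= 1/8] makes [z |-> exp (- eta (y - z)^2)] concave on [[-1, 1]];
   [1/64] leaves room for crude estimates. *)
Definition eta : R := 64^-1.

Lemma eta_gt0 : 0 < eta. Proof. by rewrite /eta invr_gt0. Qed.

Lemma expR_sq_loss_tangent (y z m : R) :
  -1 <= y <= 1 -> -1 <= z <= 1 -> -1 <= m <= 1 ->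
  expR (- (eta * (y - z) ^+ 2)) <=
  expR (- (eta * (y - m) ^+ 2)) * (1 + 2 * eta * (y - m) * (z - m)).
Proof.
move=> /andP[y1 y2] /andP[z1 z2] /andP[m1 m2].
have he : eta = 64^-1 by [].
set b := y - m; set d := z - m; set u := 2 * eta * b * d.
have hu : -1/8 <= u <= 1/8 by rewrite /u he /b /d; apply/andP; split; nra.
have hd2 : 0 <= d ^+ 2 <= 4 by rewrite sqr_ge0 /d; nra.
have -> : - (eta * (y - z) ^+ 2) = - (eta * b ^+ 2) + (u - eta * d ^+ 2).
  by rewrite /u /b /d; ring.
rewrite exp.expRD ler_wpM2l ?expR_ge0 // exp.expRD -[leRHS]mul1r.
have hEu : expR u <= (1 + u) * (1 + eta * d ^+ 2).
  have h1 : expR u * (1 - u) <= 1.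
    by rewrite -[leRHS](expRxMexpNx_1 u) ler_wpM2l ?expR_ge0 ?expR_ge1Dx.
  have hq : 1 <= (1 - u) * ((1 + u) * (1 + eta * d ^+ 2)).
    have hb2 : b ^+ 2 <= 4 by rewrite /b; nra.
    have hu2 : u ^+ 2 <= eta * d ^+ 2 / 4.
      have -> : u ^+ 2 = 4 * eta ^+ 2 * (b ^+ 2 * d ^+ 2) by rewrite /u; ring.
      have : b ^+ 2 * d ^+ 2 <= 4 * d ^+ 2 by rewrite ler_wpM2r ?sqr_ge0.
      rewrite he; lra.
    have : eta * d ^+ 2 <= 1 / 16 by rewrite he; lra.
    have := sqr_ge0 u; have : 0 <= eta * d ^+ 2 by rewrite mulr_ge0 ?sqr_ge0 ?(ltW eta_gt0).
    nra.
  have := expR_gt0 u; nra.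
have hEd : (1 + eta * d ^+ 2) * expR (- (eta * d ^+ 2)) <= 1.
  by rewrite -[leRHS](expRxMexpNx_1 (eta * d ^+ 2)) ler_wpM2r ?expR_ge0 ?expR_ge1Dx.
rewrite mul1r; apply: le_trans (ler_wpM2r (expR_ge0 _) hEu) _.
by rewrite -mulrA -[leRHS]mulr1 ler_wpM2l //; lra.
Qed.

Section Mixture.
Variables (I : Type) (s : seq I) (v q : I -> R).
Hypothesis v_ge0 : forall a, 0 <= v a.
Hypothesis q_bd : forall a, `|q a| <= 1.

Let V := \sum_(a <- s) v a.
Let mean := (\sum_(a <- s) v a * q a) / V.

Lemma weighted_sum_le : `|\sum_(a <- s) v a * q a| <= V.
Proof.
apply: le_trans (ler_norm_sum _ _ _) _; apply: ler_sum => a _.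
by rewrite normrM ger0_norm // ler_piMr.
Qed.

Lemma weighted_sumE : \sum_(a <- s) v a * q a = mean * V.
Proof.
have [V0|V0] := eqVneq V 0; last by rewrite /mean divfK.
rewrite V0 mulr0; apply/normr0_eq0/eqP.
by rewrite eq_le normr_ge0 andbT -[leRHS]V0 weighted_sum_le.
Qed.

Lemma weighted_mean_bd : `|mean| <= 1.
Proof.
have [V0|V0] := eqVneq V 0; first by rewrite /mean V0 invr0 mulr0 normr0.
have Vgt0 : 0 < V by rewrite lt_def V0 sumr_ge0.
by rewrite /mean normrM normfV (gtr0_norm Vgt0) ler_pdivrMr // mul1r weighted_sum_le.
Qed.

Lemma mixture_sq_loss (y : R) : -1 <= y <= 1 ->
  \sum_(a <- s) v a * expR (- (eta * (y - q a) ^+ 2))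
  <= V * expR (- (eta * (y - mean) ^+ 2)).
Proof.
move=> hy; have hm : -1 <= mean <= 1 by rewrite -ler_norml weighted_mean_bd.
set g := expR _; set c := 2 * eta * (y - mean).
apply: (@le_trans _ _ (\sum_(a <- s) v a * (g * (1 + c * (q a - mean))))).
  apply: ler_sum => a _; rewrite ler_wpM2l //.
  by apply: expR_sq_loss_tangent; rewrite // -ler_norml.
have E a : v a * (g * (1 + c * (q a - mean))) = g * v a + g * c * (v a * q a - mean * v a).
  by ring.
rewrite (eq_bigr _ (fun a _ => E a)) big_split /= -!mulr_sumr sumrB -mulr_sumr.
by rewrite weighted_sumE -/V subrr mulr0 addr0 mulrC.
Qed.

End Mixture.

Section SleepingExperts.
Variables (X : Type) (I : eqType) (pool : nat -> seq I) (prior : I -> R)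
  (expert : I -> X -> R).
Hypothesis pool_uniq : forall t, uniq (pool t).
Hypothesis pool_mono : forall t T, (t <= T)%N -> {subset pool t <= pool T}.
Hypothesis prior_ge0 : forall a, 0 <= prior a.
Hypothesis prior_mass : forall t, \sum_(a <- pool t) prior a <= 1.
Hypothesis expert_bd : forall a z, `|expert a z| <= 1.

Section History.
Variables (x : nat -> X) (y : nat -> R).

(* An expert outside the pool at round [s] is deemed to predict [m s], the
   learner's own forecast. *)
Definition sleeping_loss (m : nat -> R) s a : R :=
  if a \in pool s then (y s - expert a (x s)) ^+ 2 else (y s - m s) ^+ 2.

Definition weight m t a : R :=
  prior a * expR (- (eta * \sum_(1 <= s < t) sleeping_loss m s a)).

Definition forecast m t : R :=
  (\sum_(a <- pool t) weight m t a * expert a (x t)) /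
  \sum_(a <- pool t) weight m t a.

(* [forecasts t s] is the learner's forecast at round [s <= t]. *)
Fixpoint forecasts t : nat -> R :=
  if t is t'.+1 then fun s => if s == t then forecast (forecasts t') t else forecasts t' s
  else fun=> 0.

Definition prediction t := forecasts t t.

Definition learner_loss t := \sum_(1 <= s < t) (y s - prediction s) ^+ 2.

End History.

Lemma forecast_congr x x' y y' m m' t :
  (forall s, (1 <= s < t)%N -> [/\ x s = x' s, y s = y' s & m s = m' s]) ->
  x t = x' t -> forecast x y m t = forecast x' y' m' t.
Proof.
move=> agree xt; have E a : weight x y m t a = weight x' y' m' t a.
  congr (_ * expR (- (_ * _))); apply: eq_big_nat => s /agree[xs ys ms].
  by rewrite /sleeping_loss xs ys ms.
by rewrite /forecast xt; congr (_ / _); apply: eq_bigr => a _; rewrite E.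
Qed.

Lemma weight_ge0 x y m t a : 0 <= weight x y m t a.
Proof. by rewrite mulr_ge0 ?expR_ge0. Qed.

Lemma sum_pool_restrict t T (f : I -> R) : (t <= T)%N ->
  \sum_(a <- pool T | a \in pool t) f a = \sum_(a <- pool t) f a.
Proof.
move=> le_tT; rewrite -big_filter; apply: perm_big; apply: uniq_perm.
- exact/filter_uniq/pool_uniq.
- exact: pool_uniq.
- by move=> a; rewrite mem_filter andb_idr // => /pool_mono; apply.
Qed.

Section Regret.
Variables (x : nat -> X) (y : nat -> R).
Local Notation mu := (prediction x y).
Local Notation w := (weight x y mu).

Lemma forecasts_stable T s : (s <= T)%N -> forecasts x y T s = mu s.
Proof.
elim: T => [|T IH]; first by rewrite leqn0 => /eqP ->.
rewrite leq_eqVlt => /orP[/eqP -> //|lt_sT] /=.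
by rewrite ltn_eqF // IH // -ltnS.
Qed.

Lemma predictionE t : (1 <= t)%N -> mu t = forecast x y mu t.
Proof.
case: t => // t _; rewrite /prediction /= eqxx.
by apply: forecast_congr => // s /andP[_ lt_st]; rewrite forecasts_stable.
Qed.

Lemma prediction_bd t : `|mu t| <= 1.
Proof.
case: t => [|t]; first by rewrite /prediction normr0.
by rewrite predictionE // weighted_mean_bd // => a; exact: weight_ge0.
Qed.

Hypothesis y_bd : forall s, -1 <= y s <= 1.

Lemma weight_potential t T : (t <= T)%N ->
  \sum_(a <- pool T) w t.+1 a
  <= \sum_(a <- pool T) prior a * expR (- (eta * learner_loss x y t.+1)).
Proof.
elim: t => [|t IH] le_tT.
  by rewrite /learner_loss big_geq //; apply: ler_sum => a _; rewrite /weight big_geq.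
pose g z := expR (- (eta * (y t.+1 - z) ^+ 2)).
have step a : w t.+2 a = w t.+1 a *
    (if a \in pool t.+1 then g (expert a (x t.+1)) else g (mu t.+1)).
  rewrite /weight big_nat_recr //= mulrDr opprD exp.expRD mulrA /sleeping_loss.
  by case: ifP.
(* Awake experts are mixed by exp-concavity; sleeping ones are charged exactly
   the learner's loss. *)
have mix := mixture_sq_loss (pool t.+1) (weight_ge0 x y mu t.+1)
  (fun a => expert_bd a (x t.+1)) (y_bd t.+1).
rewrite -/(forecast x y _ _) -predictionE // in mix.
rewrite (eq_bigr _ (fun a _ => step a)) (bigID (mem (pool t.+1))) /=.
rewrite (eq_bigr (fun a => w t.+1 a * g (expert a (x t.+1))));
  last by move=> a ->.
rewrite sum_pool_restrict //.
rewrite [X in _ + X](eq_bigr (fun a => g (mu t.+1) * w t.+1 a));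
  last by move=> a /negPf ->; rewrite mulrC.
apply: le_trans (lerD mix (lexx _)) _.
rewrite -mulr_sumr mulrC -(sum_pool_restrict _ le_tT) -/(g _) -mulrDr.
have -> : \sum_(a <- pool T | a \in pool t.+1) w t.+1 a +
    \sum_(a <- pool T | a \notin pool t.+1) w t.+1 a =
    \sum_(a <- pool T) w t.+1 a by rewrite [RHS](bigID (mem (pool t.+1))).
apply: le_trans (ler_wpM2l (expR_ge0 _) (IH (ltnW le_tT))) _.
rewrite mulr_sumr le_eqVlt; apply/orP; left; apply/eqP; apply: eq_bigr => a _.
rewrite /g /learner_loss [in RHS]big_nat_recr //= mulrCA -exp.expRD.
by congr (_ * expR _); ring.
Qed.

Lemma learner_loss_le N : learner_loss x y N.+1 <= 4 * N%:R.
Proof.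
have -> : 4 * N%:R = \sum_(1 <= s < N.+1) (4 : R).
  by rewrite sumr_const_nat subSS subn0 mulr_natr.
apply: ler_sum_nat => s _; have := prediction_bd s; have := y_bd s.
by rewrite ler_norml => /andP[? ?] /andP[? ?]; nra.
Qed.

Lemma sleeping_loss_le a s :
  sleeping_loss x y mu s a
  <= (y s - expert a (x s)) ^+ 2 + (if a \in pool s then 0 else 4).
Proof.
rewrite /sleeping_loss; case: ifP => _; first by rewrite addr0.
have : (y s - mu s) ^+ 2 <= 4.
  have := prediction_bd s; have := y_bd s.
  by rewrite ler_norml => /andP[? ?] /andP[? ?]; nra.
by have := sqr_ge0 (y s - expert a (x s)); lra.
Qed.

Lemma asleep_rounds_le a W N : a \in pool W ->
  \sum_(1 <= s < N.+1) (if a \in pool s then 0 else 4 : R) <= 4 * W%:R.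
Proof.
move=> aW; suff : \sum_(1 <= s < N.+1) (if a \in pool s then 0 else 4 : R)
    <= 4 * (minn N W)%:R.
  by move/le_trans; apply; rewrite ler_pM2l // ler_nat geq_minr.
elim: N => [|N IH]; first by rewrite big_geq // mulr0.
rewrite big_nat_recr //=; case: (leqP W N.+1) => [le_WN|lt_NW].
  rewrite (pool_mono le_WN aW) addr0; apply: le_trans IH _.
  by rewrite ler_pM2l // ler_nat geq_minr.
rewrite (minn_idPl (ltnW (ltnW lt_NW))) in IH.
have : (if a \in pool N.+1 then 0 else 4 : R) <= 4 by case: ifP.
by rewrite -[N.+1%:R]natr1 => /(lerD IH) /le_trans; apply; lra.
Qed.

Lemma sleeping_regret a W N : a \in pool W -> 0 < prior a ->
  learner_loss x y N.+1 <= \sum_(1 <= s < N.+1) (y s - expert a (x s)) ^+ 2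
                       + 4 * W%:R + eta^-1 * ln (prior a)^-1.
Proof.
move=> aW prior_gt0.
have prior_le1 : prior a <= 1.
  by apply: le_trans (prior_mass W); rewrite (big_rem a aW) /= lerDl sumr_ge0.
have ln_prior_ge0 : 0 <= eta^-1 * ln (prior a)^-1.
  by rewrite mulr_ge0 ?invr_ge0 ?(ltW eta_gt0) // ln_ge0 // invf_ge1.
have expert_loss_ge0 : 0 <= \sum_(1 <= s < N.+1) (y s - expert a (x s)) ^+ 2.
  by rewrite sumr_ge0 // => s _; rewrite sqr_ge0.
have cum_le : \sum_(1 <= s < N.+1) sleeping_loss x y mu s a
    <= \sum_(1 <= s < N.+1) (y s - expert a (x s)) ^+ 2 + 4 * W%:R.
  apply: le_trans (ler_sum_nat (fun s _ => sleeping_loss_le a s)) _.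
  by rewrite big_split lerD2l asleep_rounds_le.
have [aN|aN] := boolP (a \in pool N); last first.
  have lt_NW : (N < W)%N by rewrite ltnNge; apply: contra aN => /pool_mono; apply.
  have := learner_loss_le N; have : (N%:R : R) <= W%:R by rewrite ler_nat ltnW.
  lra.
have key : w N.+1 a <= expR (- (eta * learner_loss x y N.+1)).
  apply: le_trans (le_trans _ (weight_potential (leqnn N))) _.
    by rewrite (big_rem a aN) /= lerDl sumr_ge0 // => b _; exact: weight_ge0.
  by rewrite -mulr_suml -[leRHS]mul1r ler_wpM2r ?expR_ge0.
move: key; rewrite /weight -ler_ln ?posrE ?mulr_gt0 ?expR_gt0 //.
rewrite lnM ?posrE ?expR_gt0 // !expRK lnV ?posrE // /eta invrK.
by move: cum_le; rewrite /eta; lra.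
Qed.
End Regret.

Lemma prediction_congr x x' y y' n :
  (forall i, (1 <= i <= n)%N -> x i = x' i) ->
  (forall i, (1 <= i < n)%N -> y i = y' i) ->
  prediction x y n = prediction x' y' n.
Proof.
elim/ltn_ind: n => -[//|n] IH xx' yy'.
have n1 : (1 <= n.+1)%N by [].
rewrite (predictionE x y n1) (predictionE x' y' n1).
apply: forecast_congr => [s /andP[s1 lt_sn]|]; last by rewrite xx' ?leqnn.
split; [by rewrite xx' // s1 ltnW | by rewrite yy' // s1 lt_sn |].
apply: IH => // [i /andP[i1 le_is] | i /andP[i1 lt_is]].
- by rewrite xx' // i1 (leq_trans le_is (ltnW lt_sn)).
- by rewrite yy' // i1 (ltn_trans lt_is lt_sn).
Qed.

(* The history [h] is re-indexed from 1, so the new point [z] is round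
   [size h + 1]; [x0] is only a default for [nth]. *)
Definition aggregating_strategy (x0 : X) : strategy X := fun h z =>
  prediction (fun i => if i == (size h).+1 then z else (nth (x0, 0) h i.-1).1)
    (fun i => (nth (x0, 0) h i.-1).2) (size h).+1.

Lemma pred_at_aggregating x0 x y n : (1 <= n)%N ->
  pred_at (aggregating_strategy x0) x y n = prediction x y n.
Proof.
case: n => // n _; rewrite /pred_at /aggregating_strategy size_map size_iota /=.
have nthE i : (1 <= i <= n)%N -> nth (x0, 0) [seq (x j, y j) | j <- iota 1 n] i.-1 = (x i, y i).
  case: i => // i /= lt_in; rewrite (nth_map 0) ?size_iota // nth_iota //.
apply: prediction_congr => i /andP[i1 i2].
  by case: eqVneq => [-> //|ne]; rewrite nthE // i1 -ltnS ltn_neqAle ne.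
by rewrite nthE // i1.
Qed.

End SleepingExperts.

Definition clip (z : R) : R := if z < -1 then -1 else if 1 < z then 1 else z.

Lemma clip_bd z : `|clip z| <= 1.
Proof. by rewrite /clip ler_norml; case: ltrP => ?; [lra | case: ltrP => ?; lra]. Qed.

Lemma clip_sq_loss_le (y z f r : R) : -1 <= y <= 1 -> `|z - f| <= r ->
  (y - clip z) ^+ 2 <= (y - f) ^+ 2 + 4 * r.
Proof.
move=> /andP[y1 y2] /[dup] /(le_trans (normr_ge0 _)) r0; rewrite ler_norml => /andP[h1 h2].
suff : (f - clip z) * (y - clip z) <= 2 * r.
  have -> : (y - clip z) ^+ 2
      = (y - f) ^+ 2 + 2 * ((f - clip z) * (y - clip z)) - (f - clip z) ^+ 2 by ring.
  by have := sqr_ge0 (f - clip z); lra.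
rewrite /clip; case: ltrP => z1; [|case: ltrP => z2].
- have : 0 <= y + 1 <= 2 by apply/andP; split; lra.
  by case/andP => ? ?; case: (lerP f (-1)) => ?; nra.
- have : -2 <= y - 1 <= 0 by apply/andP; split; lra.
  by case/andP => ? ?; case: (lerP 1 f) => ?; nra.
- have : -2 <= y - z <= 2 by apply/andP; split; lra.
  by case/andP => ? ?; nra.
Qed.

Lemma ln2_gt0 : 0 < ln (2 : R).
Proof. by apply: ln_gt0; lra. Qed.

Lemma ln2_le1 : ln (2 : R) <= 1.
Proof.
rewrite -[leRHS](expRK 1) ler_ln ?posrE ?expR_gt0 //.
by have := expR_ge1Dx (1 : R); lra.
Qed.

Lemma log2_ge0 x : 1 <= x -> 0 <= log2 x.
Proof. by move=> x1; apply: divr_ge0; [exact: ln_ge0 | exact: ltW ln2_gt0]. Qed.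

Lemma log2_ge1 x : 2 <= x -> 1 <= log2 x.
Proof. by move=> x2; rewrite ler_pdivlMr ?ln2_gt0 // mul1r ler_ln ?posrE //; lra. Qed.

Lemma ln_le_log2 x : 1 <= x -> ln x <= log2 x.
Proof.
move=> x1; rewrite ler_pdivlMr ?ln2_gt0 // -[leRHS]mulr1.
by apply: ler_wpM2l; [exact: ln_ge0 | exact: ln2_le1].
Qed.

Lemma exprn_le_log2 (n : nat) (P : R) : 2 ^+ n <= P -> n%:R <= log2 P.
Proof.
move=> le_nP; have P0 : 0 < P by apply: lt_le_trans le_nP; rewrite exprn_gt0.
by rewrite ler_pdivlMr ?ln2_gt0 // mulr_natl -lnXn // ler_ln ?posrE ?exprn_gt0.
Qed.

Lemma exists_pow2_between (c : R) : 1 <= c -> exists j, c <= 2 ^+ j <= 2 * c.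
Proof.
move=> c1; have ex : exists j, c <= 2 ^+ j.
  exists (Num.Def.trunc c).+1; apply: le_trans (ltW (truncnS_gt c)) _.
  by rewrite -natrX ler_nat ltnW // ltn_expl.
case: (ex_minnP ex) => -[|j] cj min_j.
  by exists 0%N; rewrite cj /=; rewrite expr0 in cj *; lra.
exists j.+1; rewrite cj /=.
have : ~~ (c <= 2 ^+ j) by apply/negP => /min_j; rewrite ltnn.
by rewrite -ltNge exprS; lra.
Qed.

Lemma exists_dyadic_accuracy (eps : R) : 0 < eps <= 1 / 2 ->
  exists k, 2 ^+ k <= 1 / eps /\ 2 ^- k <= 2 * eps.
Proof.
case/andP=> eps0 eps_le.
have inv_eps1 : 1 <= 1 / (2 * eps) by rewrite ler_pdivlMr ?mulr_gt0 //; lra.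
have [k /andP[le_2k]] := exists_pow2_between inv_eps1.
have -> : 2 * (1 / (2 * eps)) = 1 / eps by field; rewrite gt_eqF.
move=> le_2k_eps; exists k; split=> //.
rewrite -[2 * eps]invrK lef_pV2 ?posrE ?exprn_gt0 ?invr_gt0 ?mulr_gt0 //.
by rewrite div1r in le_2k.
Qed.

Lemma div_le_exp2N (e p : R) (j k : nat) : 0 < e -> 0 < p ->
  2 ^+ j <= p -> 2 ^+ k <= 1 / e -> e / p <= 2 ^- (j + k).
Proof.
move=> e0 p0 le_jp le_ke; have : 2 ^+ (j + k) <= p / e.
  rewrite exprD; apply: le_trans (ler_pM _ _ le_jp le_ke) _;
    by rewrite ?exprn_ge0 ?div1r.
by rewrite -(invf_div p e) lef_pV2 ?posrE ?divr_gt0 ?exprn_gt0.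
Qed.

Lemma exists_exponent (j : nat) (P : R) : 1 <= P -> j%:R <= P ->
  exists W, (j < 2 ^ W)%N /\ W%:R <= 1 + log2 P.
Proof.
move=> P1 jP; exists (trunc_log 2 j).+1; split; first exact: trunc_log_ltn.
rewrite -natr1 addrC lerD2l; have [->|j0] := posnP j.
  by rewrite trunc_log0 log2_ge0.
apply: exprn_le_log2; apply: le_trans jP; rewrite -natrX ler_nat.
exact: trunc_logP.
Qed.

Lemma ln_succ_mul_succ_le (j : nat) (P : R) : 1 <= P -> j%:R <= P ->
  ln ((j.+1 * j.+2)%:R : R) <= 4 + 2 * log2 P.
Proof.
move=> P1 jP; have ln_shift_le k : (0 < k <= 2)%N -> ln ((j + k)%:R : R) <= 2 + log2 P.
  case/andP=> k0 k2; apply: (@le_trans _ _ (ln (4 * P))).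
    rewrite ler_ln ?posrE ?ltr0n ?addn_gt0 ?k0 ?orbT //; last lra.
    have : (k%:R : R) <= 2 by rewrite ler_nat.
    by rewrite natrD; lra.
  rewrite lnM ?posrE //; last lra.
  have -> : (4 : R) = 2 ^+ 2 by rewrite expr2; lra.
  rewrite lnXn // mulr2n; have := ln_le_log2 P1; have := ln2_le1; lra.
rewrite natrM lnM ?posrE ?ltr0n // -[j.+2]addn2 -[j.+1]addn1.
by have := ln_shift_le 1%N isT; have := ln_shift_le 2%N isT; lra.
Qed.

(* [compact_cover] is stated for pointed spaces; [X -> R] is pointed by [0]. *)
HB.instance Definition _ (X : topologicalType) :=
  Pointed.copy {uniform X -> R} (X -> R).

Lemma compact_net_sizes (X : topologicalType) (A : set (X -> R)) (e : R) :
  0 < e -> compact (A : set {uniform X -> R}) -> exists n, net_sizes e A n.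
Proof.
move=> e0; rewrite (@compact_cover {uniform X -> R}) => /(_ _ A
  (fun g => interior [set h : {uniform X -> R} | forall z, `|g z - h z| < e])).
case=> [g _|g Ag|D sub_DA cover_AD]; first exact: open_interior.
  exists g => //; apply/uniform_nbhs.
  exists [set xy : R * R | ball xy.1 e xy.2]; split; first by exists e.
  by move=> h /= gh z; exact: gh.
pose s := finmap.enum_fset D.
exists (size s), (fun i => nth (fun=> 0) s i : X -> R); split.
  by move=> i lt_is; have /set_mem := sub_DA _ (mem_nth (fun=> 0) lt_is).
move=> f /cover_AD[g /= gD fg]; exists (index g s); split; first by rewrite index_mem.
rewrite nth_index // => z; move: fg => /nbhs_singleton /= /(_ z).
by rewrite distrC => /ltW.
Qed.

Lemma net_sizes_le (X : Type) (A : set (X -> R)) (e1 e2 : R) n :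
  e1 <= e2 -> net_sizes e1 A n -> net_sizes e2 A n.
Proof.
move=> le_e [g [gA cover]]; exists g; split => // f /cover[i [lt_in fg]].
by exists i; split => // z; exact: le_trans (fg z) le_e.
Qed.

Lemma ln_le_entropy (X : Type) (A : set (X -> R)) (e : R) (s : nat) :
  (exists n, net_sizes e A n) -> (forall m, net_sizes e A m -> (s <= m)%N) ->
  (0 < s)%N -> ln s%:R <= entropy e A.
Proof.
move=> [n An] min_s s0.
have le_s_inf : s%:R <= inf [set (m%:R : R) | m in net_sizes e A].
  apply: lb_le_inf; first by exists n%:R, n.
  by move=> _ [m Am <-]; rewrite ler_nat min_s.
have s1 : 1 <= (s%:R : R) by rewrite ler1n.
apply: le_trans (ln_le_log2 (le_trans s1 le_s_inf)).
by rewrite ler_ln ?posrE ?(lt_le_trans ltr01) ?(le_trans s1).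
Qed.

Lemma minimal_nets (X : Type) (A : set (X -> R)) (r : nat -> R) :
  (forall s, exists n, net_sizes (r s) A n) ->
  exists (size_net : nat -> nat) (net : nat -> nat -> X -> R),
    (forall s f, A f -> exists2 i, (i < size_net s)%N & forall z, `|f z - net s i z| <= r s)
    /\ (forall s m, net_sizes (r s) A m -> (size_net s <= m)%N).
Proof.
move=> nets; have /choice[ng ngP] : forall s, exists ng : nat * (nat -> X -> R),
    (forall f, A f -> exists2 i, (i < ng.1)%N & forall z, `|f z - ng.2 i z| <= r s)
    /\ (forall m, net_sizes (r s) A m -> (ng.1 <= m)%N).
  move=> s; have [n An] := nets s.
  have ex : exists n, `[< net_sizes (r s) A n >] by exists n; exact/asboolP.
  have [m /asboolP[g [_ cover]] min_m] := ex_minnP ex.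
  exists (m, g); split=> [f /cover[i [? ?]]|k Ak]; first by exists i.
  by apply: min_m; exact/asboolP.
by exists (fun s => (ng s).1), (fun s => (ng s).2); split => s; case: (ngP s).
Qed.

Definition grid (n : nat * nat -> nat) (t : nat) : seq ((nat * nat) * nat) :=
  [seq (jk, i) | jk <- [seq (j, k) | j <- index_iota 0 (2 ^ t), k <- index_iota 0 (2 ^ t)],
                 i <- index_iota 0 (n jk)].

Lemma mem_grid n t j k i :
  (((j, k), i) \in grid n t) = [&& (j < 2 ^ t)%N, (k < 2 ^ t)%N & (i < n (j, k))%N].
Proof.
apply/allpairsPdep/and3P => [[_ [i' [/allpairsP[[j' k'] [+ + ->]] + E]]]|[jt kt ijk]].
  by case: E => <- <- <-; rewrite !mem_index_iota.
exists (j, k), i; rewrite mem_index_iota ijk; split=> //.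
by apply/allpairsP; exists (j, k); rewrite !mem_index_iota jt kt.
Qed.

Lemma grid_uniq n t : uniq (grid n t).
Proof.
apply: allpairs_uniq_dep => [||[jk i] [jk' i'] _ _ /= [-> ->] //].
  by apply: allpairs_uniq => [||[j k] [j' k'] _ _ /= [-> ->]]; rewrite ?iota_uniq.
by move=> jk _; rewrite iota_uniq.
Qed.

Lemma grid_mono n t T : (t <= T)%N -> {subset grid n t <= grid n T}.
Proof.
move=> le_tT [[j k] i]; rewrite !mem_grid => /and3P[jt kt ->].
have le_2t : (2 ^ t <= 2 ^ T)%N by rewrite leq_exp2l.
by rewrite (leq_trans jt) ?(leq_trans kt).
Qed.

Lemma sum_inv_succ_mul_le1 M : \sum_(0 <= j < M) ((j.+1 * j.+2)%:R : R)^-1 <= 1.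
Proof.
suff -> : \sum_(0 <= j < M) ((j.+1 * j.+2)%:R : R)^-1 = 1 - (M.+1%:R)^-1.
  by rewrite lerBlDr lerDl invr_ge0 ler0n.
elim: M => [|M IH]; first by rewrite big_geq // invr1 subrr.
rewrite big_nat_recr //= IH natrM -natr1 -[M.+2]addn1 natrD -natr1.
have M0 : (0 : R) <= M%:R by rewrite ler0n.
by field; rewrite !gt_eqF //; lra.
Qed.

(* Uniform over the net of expert class [(j, k)], and [1 / ((j + 1) (j + 2))]
   over each scale index, which telescopes to total mass at most 1. *)
Definition grid_prior (n : nat * nat -> nat) (a : (nat * nat) * nat) : R :=
  let: ((j, k), _) := a in ((n (j, k) * (j.+1 * j.+2) * (k.+1 * k.+2))%:R)^-1.

Lemma grid_prior_gt0 n j k i : (i < n (j, k))%N -> 0 < grid_prior n ((j, k), i).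
Proof. by move=> ijk; rewrite invr_gt0 ltr0n !muln_gt0 (leq_ltn_trans _ ijk). Qed.

Lemma grid_prior_mass n t : \sum_(a <- grid n t) grid_prior n a <= 1.
Proof.
pose p j : R := ((j.+1 * j.+2)%:R)^-1.
have p_ge0 j : 0 <= p j by rewrite invr_ge0 ler0n.
rewrite big_allpairs_dep /=.
apply: (@le_trans _ _ (\sum_(jk <- [seq (j, k) | j <- index_iota 0 (2 ^ t),
                                                 k <- index_iota 0 (2 ^ t)])
  p jk.1 * p jk.2)).
  apply: ler_sum => -[j k] _; rewrite sumr_const_nat subn0 -mulr_natl.
  have [->|n0] := posnP (n (j, k)); first by rewrite mul0r mulr_ge0.
  rewrite !natrM /p le_eqVlt; apply/orP; left; apply/eqP; field.
  have j0 : (0 : R) <= j%:R by rewrite ler0n.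
  have k0 : (0 : R) <= k%:R by rewrite ler0n.
  by rewrite pnatr_eq0 -lt0n n0 andbT; apply/and4P; split; apply/eqP; lra.
rewrite big_allpairs /= -(mulr1 1).
under eq_bigr do rewrite -mulr_sumr.
rewrite -mulr_suml; have S1 := sum_inv_succ_mul_le1 (2 ^ t).
have S0 : 0 <= \sum_(j <- index_iota 0 (2 ^ t)) p j by rewrite sumr_ge0.
by rewrite ler_pM.
Qed.

Lemma ln_inv_grid_prior_le n j k i (P Q : R) : (0 < n (j, k))%N ->
  1 <= P -> j%:R <= P -> 1 <= Q -> k%:R <= Q ->
  ln (grid_prior n ((j, k), i))^-1 <= ln (n (j, k))%:R + 8 + 2 * log2 P + 2 * log2 Q.
Proof.
move=> n0 P1 jP Q1 kQ; rewrite invrK natrM (natrM _ (n _)).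
rewrite !lnM ?posrE ?mulr_gt0 ?ltr0n ?muln_gt0 ?n0 //.
by have := ln_succ_mul_succ_le P1 jP; have := ln_succ_mul_succ_le Q1 kQ; lra.
Qed.

Lemma grid_prior_ge0 n a : 0 <= grid_prior n a.
Proof. by case: a => -[j k] i; rewrite invr_ge0 ler0n. Qed.

Section Multiscale.
Variables (X : Type) (A : set (X -> R)) (size_net : nat -> nat)
  (net : nat -> nat -> X -> R).
Hypothesis net_cover : forall s f, A f ->
  exists2 i, (i < size_net s)%N & forall z, `|f z - net s i z| <= 2 ^- s.
Hypothesis net_min : forall s m, net_sizes (2 ^- s) A m -> (size_net s <= m)%N.
Hypothesis A_nets : forall e, 0 < e -> exists n, net_sizes e A n.

Definition class_size (jk : nat * nat) := size_net (jk.1 + jk.2).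

(* Meant for functions of norm at most [2^j], to accuracy [2^-k]. *)
Definition scaled_expert (a : (nat * nat) * nat) (z : X) : R :=
  let: ((j, k), i) := a in clip (2 ^+ j * net (j + k) i z).

Lemma scaled_expert_bd a z : `|scaled_expert a z| <= 1.
Proof. by case: a => -[j k] i; exact: clip_bd. Qed.

Lemma scaled_net_approx (F : X -> R) j k : A (fun z => (2 ^+ j)^-1 * F z) ->
  exists2 i, (i < class_size (j, k))%N &
    forall z, `|2 ^+ j * net (j + k) i z - F z| <= 2 ^- k.
Proof.
move=> /(net_cover (j + k))[i lt_i approx]; exists i => // z.
have p2j : 0 < (2 : R) ^+ j by rewrite exprn_gt0.
have -> : 2 ^+ j * net (j + k) i z - F z = - (2 ^+ j * ((2 ^+ j)^-1 * F z - net (j + k) i z)).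
  by field; rewrite gt_eqF.
rewrite normrN normrM gtr0_norm // -ler_pdivlMl // (le_trans (approx z)) //.
by rewrite exprD invfM mulrC.
Qed.

Lemma scaled_expert_loss_le (x : nat -> X) (y : nat -> R) (F : X -> R) j k N :
  (forall s, -1 <= y s <= 1) -> A (fun z => (2 ^+ j)^-1 * F z) ->
  exists2 i, (i < class_size (j, k))%N &
    \sum_(1 <= s < N.+1) (y s - scaled_expert ((j, k), i) (x s)) ^+ 2
    <= \sum_(1 <= s < N.+1) (y s - F (x s)) ^+ 2 + 4 * (2 ^- k * N%:R).
Proof.
move=> y_bd /(@scaled_net_approx F j k)[i lt_i approx]; exists i => //.
apply: le_trans (ler_sum_nat (fun s _ => clip_sq_loss_le (y_bd s) (approx (x s)))) _.
by rewrite big_split /= sumr_const_nat subSS subn0 lerD2l -[_ *+ N]mulr_natr mulrA.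
Qed.

Lemma ln_size_net_le_entropy s e : 0 < e -> e <= 2 ^- s -> (0 < size_net s)%N ->
  ln (size_net s)%:R <= entropy e A.
Proof.
move=> e0 le_es; apply: ln_le_entropy (A_nets e0) _.
by move=> m /(net_sizes_le le_es); exact: net_min.
Qed.

Lemma multiscale_regret (x : nat -> X) (y : nat -> R) (F : X -> R) (mm eps : R)
    (N : nat) :
  (forall s, -1 <= y s <= 1) -> 1 <= mm ->
  (forall c, mm <= c -> A (fun z => c^-1 * F z)) -> 0 < eps <= 1 / 2 ->
  learner_loss (grid class_size) (grid_prior class_size) scaled_expert x y N.+1
  <= \sum_(1 <= s < N.+1) (y s - F (x s)) ^+ 2
     + 1000 * (entropy (eps / (2 * mm)) A + log2 (log2 (1 / eps))
               + log2 (log2 (2 * mm)) + eps * N%:R + 1).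
Proof.
move=> y_bd mm1 F_ball eps_range; set phi := 2 * mm.
have [eps0 eps_le] := andP eps_range.
have [j /andP[mm_le_2j le_2j_phi]] := exists_pow2_between mm1.
have [k [le_2k_eps inv_2k]] := exists_dyadic_accuracy eps_range.
have phi2 : 2 <= phi by rewrite /phi; lra.
have eps2 : 2 <= 1 / eps by rewrite ler_pdivlMr //; lra.
have L1 := log2_ge1 phi2; have L2 := log2_ge1 eps2.
have jP : j%:R <= log2 phi := exprn_le_log2 le_2j_phi.
have kQ : k%:R <= log2 (1 / eps) := exprn_le_log2 le_2k_eps.
have [Wj [jW Wj_le]] := exists_exponent L1 jP.
have [Wk [kW Wk_le]] := exists_exponent L2 kQ.
have [i lt_i expert_loss] := scaled_expert_loss_le x k N y_bd (F_ball _ mm_le_2j).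
have aW : ((j, k), i) \in grid class_size (Wj + Wk).
  by rewrite mem_grid lt_i (leq_trans jW) ?(leq_trans kW) // leq_exp2l ?leq_addl ?leq_addr.
have := sleeping_regret (@grid_uniq class_size) (@grid_mono class_size)
  (@grid_prior_ge0 class_size) (@grid_prior_mass class_size) scaled_expert_bd x
  y_bd N aW (grid_prior_gt0 lt_i).
rewrite /eta invrK natrD => regret.
have size0 : (0 < class_size (j, k))%N by apply: leq_ltn_trans lt_i.
have prior_le := @ln_inv_grid_prior_le class_size j k i _ _ size0 L1 jP L2 kQ.
have phi0 : 0 < phi by lra.
have entropy_ge : ln (class_size (j, k))%:R <= entropy (eps / phi) A.
  apply: ln_size_net_le_entropy size0; first by rewrite divr_gt0.
  exact: div_le_exp2N.
have entropy_ge0 : 0 <= entropy (eps / phi) A.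
  by apply: le_trans entropy_ge; rewrite ln_ge0 // ler1n.
have : 2 ^- k * N%:R <= 2 * (eps * N%:R) by rewrite mulrA ler_wpM2r.
have := log2_ge0 L1; have := log2_ge0 L2.
have : 0 <= eps * N%:R by rewrite mulr_ge0 // ltW.
lra.
Qed.

End Multiscale.

Theorem theorem3 : exists C : R,
  forall (X : topologicalType) (x0 : X) (Fs : set (X -> R)) (nF : (X -> R) -> R),
  banach_compact_emb Fs nF ->
  exists S : strategy X,
    (forall (x : nat -> X) (y : nat -> R),
       (forall n, -1 <= y n <= 1) ->
       forall n : nat, (1 <= n)%N -> `|pred_at S x y n| <= 1) /\
    (forall (x : nat -> X) (y : nat -> R),
       (forall n, -1 <= y n <= 1) ->
       forall (N : nat), (1 <= N)%N ->
       forall F : X -> R, Fs F ->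
       let phi := 2 * Num.max 1 (nF F) in
       \sum_(1 <= n < N.+1) (y n - pred_at S x y n) ^+ 2
       <= \sum_(1 <= n < N.+1) (y n - F (x n)) ^+ 2
          + C * inf [set entropy (eps / phi) [set f | Fs f /\ nF f <= 1]
                         + log2 (log2 (1 / eps)) + log2 (log2 phi)
                         + eps * N%:R + 1
                    | eps in [set e : R | 0 < e <= 1 / 2]]).
Proof.
exists 1000 => X x0 Fs nF [_ [_ [_ Fs_scale]] [_ [nF_scale _]] _ ball_compact].
set A := [set f | Fs f /\ nF f <= 1].
have A_nets e : 0 < e -> exists n, net_sizes e A n.
  by move=> e0; exact: compact_net_sizes.
have dyadic_nets s : exists n, net_sizes (2 ^- s) A n.
  by apply: A_nets; rewrite invr_gt0 exprn_gt0.
have [size_net [net [net_cover net_min]]] := minimal_nets dyadic_nets.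
pose pool := grid (class_size size_net).
pose prior := grid_prior (class_size size_net).
pose expert := scaled_expert net.
pose S := aggregating_strategy pool prior expert x0.
exists S; split=> [x y _ n n1|x y y_bd N _ F FsF /=].
  rewrite pred_at_aggregating // prediction_bd // => *.
  - exact: grid_prior_ge0.
  - exact: scaled_expert_bd.
set mm := Num.max 1 (nF F); have mm1 : 1 <= mm by rewrite le_max lexx.
have F_ball c : mm <= c -> A (fun z => c^-1 * F z).
  move=> le_mc; have c0 : 0 < c by apply: lt_le_trans le_mc; lra.
  split; first exact: Fs_scale.
  rewrite nF_scale // ger0_norm ?invr_ge0 ?(ltW c0) // ler_pdivrMl // mulr1.
  by apply: le_trans le_mc; rewrite le_max lexx orbT.
have -> : \sum_(1 <= n < N.+1) (y n - pred_at S x y n) ^+ 2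
    = learner_loss pool prior expert x y N.+1.
  by apply: eq_big_nat => n /andP[n1 _]; rewrite pred_at_aggregating.
set L := learner_loss _ _ _ _ _ _; set LF := \sum_(1 <= n < N.+1) _; set B := inf _.
suff : (L - LF) / 1000 <= B by lra.
apply: lb_le_inf => [|_ [eps eps_range <-]].
  by eexists; exists (1 / 2) => //; apply/andP; split; lra.
have := multiscale_regret net_cover net_min A_nets x N y_bd mm1 F_ball eps_range.
by rewrite -/L -/LF; lra.
Qed.
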